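(* The set $\mathcal{I}_{\mathrm{str}}(\Lambda \cap T_1)$ has the cardinality of the continuum.
   Context: Let $\mathbf{2}=\{0,1\}$. A partial function of arity $n$ on $\mathbf{2}$ is a map $f:\operatorname{dom} f\to\mathbf{2}$ with $\operatorname{dom} f\subseteq \mathbf{2}^n$; it is total if $\operatorname{dom} f=\mathbf{2}^n$. $P_{\mathbf{2}}$ is the set of all partial functions, $O_{\mathbf{2}}$ the set of total ones. Composition $F=f(g_1,\dots,g_n)$ is given by $F(\mathbf{x})=f(g_1(\mathbf{x}),\dots,g_n(\mathbf{x}))$ on $\operatorname{dom} F=\{\mathbf{x}\in\bigcap_i\operatorname{dom} g_i : (g_1(\mathbf{x}),\dots,g_n(\mathbf{x}))\in\operatorname{dom} f\}$. A partial clone is a composition-closed subset of $P_{\mathbf{2}}$ containing all projections; a total clone is one contained in $O_{\mathbf{2}}$. A partial clone $X$ is strong if it contains every restriction of each of its members. For a total clone $C$, $\mathcal{I}_{\mathrm{str}}(C)$ is the set of all strong partial clones $X$ with $X\cap O_{\mathbf{2}}=C$. $\Lambda$ is the total clone generated by $\land$ and the constants $c_0,c_1$; $T_1$ is the clone of total Boolean functions $f$ with $f(1,\dots,1)=1$. *)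

From mathcomp Require Import all_boot.
Set Implicit Arguments. Unset Strict Implicit. Unset Printing Implicit Defensive.

Definition btuple (n : nat) := {ffun 'I_n -> bool}.

(* A partial function on 2 = {0,1} of arity (pred_ar f).+1 :
   f x = None means x is not in dom f. *)
Record pfun := PFun {
  pred_ar : nat;
  pfn : {ffun btuple pred_ar.+1 -> option bool} }.

Definition arity (f : pfun) : nat := (pred_ar f).+1.

Definition total (f : pfun) : Prop := forall x, pfn f x <> None.

Definition comp (f : pfun) (m : nat)
  (gs : 'I_(arity f) -> {ffun btuple m.+1 -> option bool}) :
  {ffun btuple m.+1 -> option bool} :=
  [ffun x => if [forall i, gs i x != None]
             then pfn f [ffun i => odflt false (gs i x)]
             else None].

Definition proj (n : nat) (i : 'I_n.+1) : pfun :=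
  PFun [ffun x : btuple n.+1 => Some (x i)].

Definition partial_clone (X : pfun -> Prop) : Prop :=
  (forall (n : nat) (i : 'I_n.+1), X (proj i)) /\
  (forall (f : pfun) (m : nat) (gs : 'I_(arity f) -> {ffun btuple m.+1 -> option bool}),
      X f -> (forall i, X (PFun (gs i))) -> X (PFun (comp gs))).

Definition restriction_of (n : nat) (g f : {ffun btuple n.+1 -> option bool}) : Prop :=
  forall x, g x = None \/ g x = f x.

Definition strong_partial_clone (X : pfun -> Prop) : Prop :=
  partial_clone X /\
  (forall (n : nat) (f g : {ffun btuple n.+1 -> option bool}),
      X (PFun f) -> restriction_of g f -> X (PFun g)).

Definition generated (S : pfun -> Prop) (f : pfun) : Prop :=
  forall Y, partial_clone Y -> (forall g, S g -> Y g) -> Y f.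

Definition f_and : pfun :=
  PFun [ffun x : btuple 2 => Some (x ord0 && x (lift ord0 ord0))].
Definition f_const (b : bool) : pfun := PFun [ffun _ : btuple 1 => Some b].

Definition Lambda_gens (g : pfun) : Prop :=
  g = f_and \/ g = f_const false \/ g = f_const true.

Definition Lambda (f : pfun) : Prop := generated Lambda_gens f.

Definition T1 (f : pfun) : Prop :=
  total f /\ pfn f [ffun _ => true] = Some true.

(* I_str(C): strong partial clones X with X ∩ O_2 = C *)
Definition Istr (C : pfun -> Prop) (X : pfun -> Prop) : Prop :=
  strong_partial_clone X /\ (forall f, (X f /\ total f) <-> C f).

(* Λ ∩ T1 consists of the conjunctions x_i1 ∧ ... ∧ x_ik (k >= 0); its total
   functions are exactly the total functions preserving x <= y, x ∧ y -> z
   and {1}.  For n >= 3 let rho_n be the (n+3)-ary relation on "points"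
   0..n-1 and three further coordinates u, t, w stating: a point implies u,
   two points imply t, all points imply w, and w implies t.  Every relation
   involved contains the all-ones tuple and is closed under ∧, so for each
   S ⊆ ℕ the partial functions preserving the three base relations and the
   rho_(k+3), k ∈ S, form a member X_S of I_str(Λ ∩ T1).
   The rho_n are rigid: a map of coordinates pulling rho_n back into rho_m,
   keeping the points off w and fixing w, is a bijection between the points,
   so m = n.  Hence the partial function defined on the rows of the matrix
   whose columns enumerate rho_n, sending row i to [i != w], preserves every
   rho_m with m <> n but not rho_n, and S ↦ X_S is injective.  Coding partial
   functions by naturals injects I_str(Λ ∩ T1) into 2^ℕ, and Cantor–Bernstein
   gives the bijection. *)

From Pilot Require Import Defs.
From mathcomp Require Import all_boot zify.
From mathcomp Require Import boolp classical_sets functions cardinality.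

Set Implicit Arguments.
Unset Strict Implicit.
Unset Printing Implicit Defensive.

Definition pres (f : pfun) (m : nat) (R : pred (btuple m)) : Prop :=
  forall F : 'I_m -> btuple (arity f),
    (forall c, R [ffun r => F r c]) ->
    (forall r, pfn f (F r) <> None) ->
    R [ffun r => odflt false (pfn f (F r))].

Lemma pres_proj m (R : pred (btuple m)) n (i : 'I_n.+1) : pres (proj i) R.
Proof.
move=> F RF _; have := RF i.
by congr R; apply/ffunP=> r; rewrite !ffunE.
Qed.

Lemma pres_comp m (R : pred (btuple m)) (f : pfun) k
    (gs : 'I_(arity f) -> {ffun btuple k.+1 -> option bool}) :
  pres f R -> (forall i, pres (PFun (gs i)) R) -> pres (PFun (Defs.comp gs)) R.
Proof.
move=> Rf Rgs F RF domF.
have gs_def r : [forall i, gs i (F r) != None].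
  by move: (domF r); rewrite /= ffunE; case: ifP.
pose G r : btuple (arity f) := [ffun i => odflt false (gs i (F r))].
have RG c : R [ffun r => G r c].
  have domgs r : pfn (PFun (gs c)) (F r) <> None.
    by move/forallP: (gs_def r) => /(_ c) /eqP.
  have := Rgs c F RF domgs.
  by congr R; apply/ffunP=> r; rewrite !ffunE.
have domG r : pfn f (G r) <> None by move: (domF r); rewrite /= ffunE gs_def.
have := Rf G RG domG.
by congr R; apply/ffunP=> r; rewrite !ffunE /= gs_def.
Qed.

Lemma pres_restr m (R : pred (btuple m)) n (f g : {ffun btuple n.+1 -> option bool}) :
  pres (PFun f) R -> restriction_of g f -> pres (PFun g) R.
Proof.
move=> Rf gf F RF domg.
have gfF r : g (F r) = f (F r) by case: (gf (F r)) => // /(domg r).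
have domf r : pfn (PFun f) (F r) <> None by rewrite /= -gfF; exact: domg.
have := Rf F RF domf.
by congr R; apply/ffunP=> r; rewrite !ffunE /= gfF.
Qed.

Definition brel := {m : nat & pred (btuple m)}.

Definition pPol (Q : brel -> Prop) (f : pfun) : Prop :=
  forall R : brel, Q R -> pres f (projT2 R).

Lemma pPol_strong (Q : brel -> Prop) : strong_partial_clone (pPol Q).
Proof.
split; first split.
- by move=> n i R _; exact: pres_proj.
- by move=> f m gs Qf Qgs R QR; apply: pres_comp (Qf R QR) _ => i; exact: Qgs.
- by move=> n f g Qf gf R QR; exact: pres_restr (Qf R QR) gf.
Qed.

Definition conj_fun n (b : bool) (s : seq 'I_n.+1) : {ffun btuple n.+1 -> option bool} :=
  [ffun x : btuple n.+1 => Some (b && \big[andb/true]_(i <- s) x i)].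

Definition is_conj (f : pfun) : Prop := exists b s, pfn f = conj_fun b s.

Lemma is_conj_clone : partial_clone is_conj.
Proof.
split.
- move=> n i; exists true, [:: i]; apply/ffunP => x.
  by rewrite !ffunE big_seq1.
- move=> f m gs [b [s fE]] conj_gs.
  have /fin_all_exists[u gsE] : forall i, exists u : bool * seq 'I_m.+1,
      gs i = conj_fun u.1 u.2.
    by move=> i; case: (conj_gs i) => b' [s' e]; exists (b', s').
  exists (b && \big[andb/true]_(i <- s) (u i).1), (flatten [seq (u i).2 | i <- s]).
  apply/ffunP => x; rewrite /= !ffunE.
  have -> : [forall i, gs i x != None] by apply/forallP => i; rewrite gsE ffunE.
  rewrite fE ffunE -andbA big_flatten big_map -big_split /=; congr (Some (b && _)).
  by apply: eq_bigr => i _; rewrite ffunE gsE ffunE.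
Qed.

Lemma Lambda_is_conj f : Lambda f -> is_conj f.
Proof.
move=> Lf; apply: Lf => [|g]; first exact: is_conj_clone.
case=> [->|[->|->]].
- exists true, [:: ord0; lift ord0 ord0]; apply/ffunP => x.
  by rewrite !ffunE !big_cons big_nil andbT.
- by exists false, [::]; apply/ffunP => x; rewrite !ffunE.
- by exists true, [::]; apply/ffunP => x; rewrite !ffunE big_nil.
Qed.

Lemma Lambda_conj_fun n (s : seq 'I_n.+1) : Lambda (PFun (conj_fun true s)).
Proof.
move=> Y [Yproj Ycomp] Ygens.
elim: s => [|i s IHs].
  pose gs (_ : 'I_1) := pfn (proj (ord0 : 'I_n.+1)).
  have -> : conj_fun true [::] = Defs.comp (f := f_const true) gs.
    apply/ffunP => x; rewrite !ffunE.
    have -> : [forall j, gs j x != None] by apply/forallP => j; rewrite ffunE.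
    by rewrite ffunE big_nil.
  by apply: (Ycomp (f_const true)) => [|j]; [apply: Ygens; right; right | exact: Yproj].
pose gs (j : 'I_2) := if j == ord0 then pfn (proj i) else conj_fun true s.
have -> : conj_fun true (i :: s) = Defs.comp (f := f_and) gs.
  apply/ffunP => x; rewrite !ffunE.
  have -> : [forall j, gs j x != None].
    by apply/forallP => j; rewrite /gs; case: ifP; rewrite ffunE.
  by rewrite big_cons.
apply: (Ycomp f_and) => [|j]; first by apply: Ygens; left.
by rewrite /gs; case: ifP => _; [exact: Yproj | exact: IHs].
Qed.

Definition top_meet_closed m (R : pred (btuple m)) : Prop :=
  R [ffun _ => true] /\ forall x y, R x -> R y -> R [ffun i => x i && y i].

Lemma pres_conj_fun n (s : seq 'I_n.+1) m (R : pred (btuple m)) :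
  top_meet_closed R -> pres (PFun (conj_fun true s)) R.
Proof.
move=> [R1 Rmeet]; rewrite /pres /arity /= => F RF _.
elim: s => [|i s IHs].
  by congr R: R1; apply/ffunP => r; rewrite !ffunE big_nil.
have := Rmeet _ _ (RF i) IHs.
by congr R; apply/ffunP => r; rewrite !ffunE big_cons.
Qed.

Lemma LambdaT1_pres f m (R : pred (btuple m)) :
  Lambda f -> T1 f -> top_meet_closed R -> pres f R.
Proof.
case: f => n ff /Lambda_is_conj[b [s /= ->]] [_ /=].
rewrite ffunE => -[/andP[-> _]]; exact: pres_conj_fun.
Qed.

Lemma monotone_meet_closed_conj (I : finType) (p : pred {ffun I -> bool}) :
    p [ffun _ => true] ->
    (forall x y : {ffun I -> bool}, (forall i, x i ==> y i) -> p x -> p y) ->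
    (forall x y : {ffun I -> bool}, p x -> p y -> p [ffun i => x i && y i]) ->
  exists A : {set I}, forall x, p x = [forall i in A, x i].
Proof.
move=> p1 p_mono p_meet.
pose meet (x y : {ffun I -> bool}) := [ffun i => x i && y i].
pose z := \big[meet/[ffun _ => true]]_(y | p y) y.
have pz : p z by apply: (big_ind p).
have zE i : z i = [forall y, p y ==> y i].
  rewrite (big_morph (fun x : {ffun I -> bool} => x i) (id1 := true) (op1 := andb)).
  - by rewrite big_andE.
  - by move=> x y; rewrite ffunE.
  - by rewrite ffunE.
exists [set i | z i] => x; apply/idP/forall_inP => [px i|xz].
  by rewrite inE zE => /forall_inP; apply.
by apply: p_mono pz => i; apply/implyP => zi; apply: xz; rewrite inE.
Qed.

Definition le_rel : pred (btuple 2) := fun x => x ord0 ==> x ord_max.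
Definition horn_rel : pred (btuple 3) := fun x => x ord0 && x (lift ord0 ord0) ==> x ord_max.
Definition one_rel : pred (btuple 1) := fun x => x ord0.

Section TotalPres.
Variables (n : nat) (ff : {ffun btuple n.+1 -> option bool}).
Hypothesis ff_total : Defs.total (PFun ff).

Let tf (x : btuple n.+1) := odflt false (ff x).

Lemma total_ffE x : ff x = Some (tf x).
Proof. by rewrite /tf; case E: (ff x) => //; case: (ff_total E). Qed.

Lemma pres_le_monotone (x y : btuple n.+1) :
  pres (PFun ff) le_rel -> (forall i, x i ==> y i) -> tf x -> tf y.
Proof.
move=> Rle xy; pose F (r : 'I_2) := if r == ord0 then x else y.
have RF c : le_rel [ffun r => F r c] by rewrite /le_rel !ffunE; exact: xy.
by have /implyP := Rle F RF (fun r => @ff_total (F r)); rewrite !ffunE.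
Qed.

Lemma pres_horn_meet (x y : btuple n.+1) :
  pres (PFun ff) horn_rel -> tf x -> tf y -> tf [ffun i => x i && y i].
Proof.
move=> Rhorn tx ty.
pose F (r : 'I_3) := if r == ord0 then x else if r == lift ord0 ord0 then y
                     else [ffun i => x i && y i].
have RF c : horn_rel [ffun r => F r c] by rewrite /horn_rel !ffunE /= implybb.
have /implyP := Rhorn F RF (fun r => @ff_total (F r)); rewrite !ffunE /F /=.
by apply; apply/andP.
Qed.

Lemma pres_one_top : pres (PFun ff) one_rel -> tf [ffun _ => true].
Proof.
move=> Rone; pose F (_ : 'I_1) : btuple n.+1 := [ffun _ => true].
have RF c : one_rel [ffun r => F r c] by rewrite /one_rel !ffunE.
by have := Rone F RF (fun r => @ff_total (F r)); rewrite /one_rel ffunE.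
Qed.

Lemma total_pres_conj_fun :
  pres (PFun ff) le_rel -> pres (PFun ff) horn_rel -> pres (PFun ff) one_rel ->
  exists s, ff = conj_fun true s.
Proof.
move=> Rle Rhorn Rone.
have [|x y|x y|A tfE] := @monotone_meet_closed_conj _ tf.
- exact: pres_one_top.
- by move=> xy; exact: pres_le_monotone.
- exact: pres_horn_meet.
exists (enum A); apply/ffunP => x.
by rewrite total_ffE tfE ffunE big_enum big_andE.
Qed.

End TotalPres.

Definition base_rels (R : brel) : Prop :=
  [\/ R = existT _ 2 le_rel, R = existT _ 3 horn_rel | R = existT _ 1 one_rel].

Lemma pPol_total_LambdaT1 (Q : brel -> Prop) :
    (forall R, base_rels R -> Q R) ->
    (forall R, Q R -> top_meet_closed (projT2 R)) ->
  forall f, pPol Q f /\ Defs.total f <-> Lambda f /\ T1 f.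
Proof.
move=> Qbase Qclosed [n ff]; split => [[Qff ff_total]|[Lf T1f]].
  have pres_base R : base_rels R -> pres (PFun ff) (projT2 R) by move/Qbase; exact: Qff.
  have [s ->] := total_pres_conj_fun ff_total (pres_base _ (Or31 _ _ erefl))
    (pres_base _ (Or32 _ _ erefl)) (pres_base _ (Or33 _ _ erefl)).
  split; first exact: Lambda_conj_fun.
  split=> [x|]; rewrite /= ffunE //.
  by under eq_bigr do rewrite ffunE; rewrite big1_eq.
split; last by case: T1f.
by move=> R /Qclosed; exact: LambdaT1_pres.
Qed.

Section Rho.
Variable n : nat.

Definition idx_u : 'I_n.+3 := inord n.
Definition idx_t : 'I_n.+3 := inord n.+1.
Definition idx_w : 'I_n.+3 := inord n.+2.
Definition is_point (i : 'I_n.+3) : bool := i < n.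

Lemma idx_uE : idx_u = n :> nat. Proof. by rewrite inordK //; lia. Qed.
Lemma idx_tE : idx_t = n.+1 :> nat. Proof. by rewrite inordK //; lia. Qed.
Lemma idx_wE : idx_w = n.+2 :> nat. Proof. by rewrite inordK //; lia. Qed.

Definition rho (x : btuple n.+3) : bool :=
  [&& [forall i, is_point i && x i ==> x idx_u],
      [forall i, forall j, [&& is_point i, is_point j, i != j, x i & x j] ==> x idx_t],
      [forall i, is_point i ==> x i] ==> x idx_w &
      x idx_w ==> x idx_t].

Lemma rhoP (x : btuple n.+3) :
  reflect [/\ forall i, is_point i -> x i -> x idx_u,
              forall i j, is_point i -> is_point j -> i != j -> x i -> x j -> x idx_t,
              (forall i, is_point i -> x i) -> x idx_w &
              x idx_w -> x idx_t]
          (rho x).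
Proof.
apply: (iffP and4P) => [[/forallP H1 /forallP H2 /implyP H3 /implyP H4]|[H1 H2 H3 H4]].
  split=> // [i pi xi|i j pi pj ij xi xj|all_pts].
  - by apply: (implyP (H1 i)); rewrite pi xi.
  - by apply: (implyP (forallP (H2 i) j)); rewrite pi pj ij xi xj.
  - by apply: H3; apply/forallP => i; apply/implyP; exact: all_pts.
split; last exact/implyP.
- by apply/forallP => i; apply/implyP => /andP[]; exact: H1.
- by apply/forallP => i; apply/forallP => j; apply/implyP => /and5P[]; exact: H2.
- by apply/implyP => /forallP all_pts; apply: H3 => i; exact/implyP.
Qed.

Lemma rho_top_meet_closed : top_meet_closed rho.
Proof.
split; first by apply/rhoP; split=> *; rewrite ffunE.
move=> x y /rhoP[x1 x2 x3 x4] /rhoP[y1 y2 y3 y4]; apply/rhoP.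
split=> [i pi|i j pi pj ij|all_pts|]; rewrite !ffunE.
- by case/andP => /(x1 i pi) -> /(y1 i pi).
- by case/andP => xi yi /andP[xj yj]; rewrite (x2 i j) ?(y2 i j).
- apply/andP; split; [apply: x3 | apply: y3] => i /all_pts; rewrite ffunE; by case/andP.
- by case/andP => /x4 -> /y4.
Qed.

Definition point0 : 'I_n.+3 := inord 0.
Definition point1 : 'I_n.+3 := inord 1.
Definition point2 : 'I_n.+3 := inord 2.

Lemma point0E : point0 = 0 :> nat. Proof. by rewrite inordK //; lia. Qed.
Lemma point1E : point1 = 1 :> nat. Proof. by rewrite inordK //; lia. Qed.
Lemma point2E : point2 = 2 :> nat. Proof. by rewrite inordK //; lia. Qed.

End Rho.

Ltac idx_lia :=
  repeat match goal with H : is_true _ |- _ => revert H end;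
  rewrite /is_point ?ffunE -?val_eqE /= ?idx_uE ?idx_tE ?idx_wE ?point0E ?point1E ?point2E;
  lia.

Section RhoMembers.
Variable n : nat.
Hypothesis n_gt2 : 2 < n.

Lemma point0_is_point : is_point (point0 n). Proof. idx_lia. Qed.
Lemma point1_is_point : is_point (point1 n). Proof. idx_lia. Qed.

(* Three distinct points refute the premise of condition 3 for every tuple
   below containing at most two points. *)
Ltac rho_member :=
  apply/rhoP; split=> [k|k l|all_pts|];
  [ | | have := all_pts (point0 n); have := all_pts (point1 n); have := all_pts (point2 n) | ];
  idx_lia.

Lemma rho_point_u p : is_point p -> rho [ffun i => (i == p) || (i == idx_u n)].
Proof. move=> pp; rho_member. Qed.

Lemma rho_pair i j : i != idx_w n -> j != idx_w n ->
  rho [ffun k => [|| k == i, k == j, k == idx_u n | k == idx_t n]].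
Proof. move=> iw jw; rho_member. Qed.

Lemma rho_cut p : is_point p -> rho [ffun i => (i != p) && (i != idx_w n)].
Proof.
move=> pp; apply/rhoP; split=> [i|i j|all_pts|]; try idx_lia.
by have := all_pts p pp; rewrite ffunE eqxx.
Qed.

Lemma rho_wt : rho [ffun i => (i == idx_w n) || (i == idx_t n)].
Proof. rho_member. Qed.

Lemma rho_t : rho [ffun i => i == idx_t n].
Proof. rho_member. Qed.

Lemma rho_empty : rho ([ffun _ => false] : btuple n.+3).
Proof. rho_member. Qed.

Lemma rho_sep i j : i != idx_w n -> j != idx_w n ->
  exists2 C, rho C & [&& C i, C j & ~~ C (idx_w n)].
Proof.
move=> iw jw; exists [ffun k => [|| k == i, k == j, k == idx_u n | k == idx_t n]].
  exact: rho_pair.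
by rewrite !ffunE !eqxx orbT; idx_lia.
Qed.

End RhoMembers.

Lemma card_points n : #|[pred a : 'I_n.+3 | is_point a]| = n.
Proof. by rewrite -sum1_card (big_ord_narrow (leqW (leqW (leqnSn n)))) sum1_card card_ord. Qed.

Section Rigidity.
Variables (n m : nat) (s : 'I_m.+3 -> 'I_n.+3).
Hypothesis n_gt2 : 2 < n.
Hypothesis s_pull : forall C, rho C -> rho [ffun r => C (s r)].

Lemma rho_pull C : rho C ->
  [/\ forall a, is_point a -> C (s a) -> C (s (idx_u m)),
      forall a b, is_point a -> is_point b -> a != b -> C (s a) -> C (s b) -> C (s (idx_t m)),
      (forall a, is_point a -> C (s a)) -> C (s (idx_w m)) &
      C (s (idx_w m)) -> C (s (idx_t m))].
Proof.
move/s_pull/rhoP => [H1 H2 H3 H4]; split.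
- by move=> a pa; have := H1 a pa; rewrite !ffunE.
- by move=> a b pa pb ab; have := H2 a b pa pb ab; rewrite !ffunE.
- by move=> all_pts; have := H3; rewrite ffunE; apply => a /all_pts; rewrite ffunE.
- by move: H4; rewrite !ffunE.
Qed.

Section WFixed.
Hypothesis s_points : forall a, is_point a -> s a != idx_w n.
Hypothesis s_w : s (idx_w m) = idx_w n.

Lemma pull_onto_points p : is_point p -> exists2 a, is_point a & s a = p.
Proof.
move=> pp.
have [/existsP[a /andP[pa /eqP sa]]|no_pre] := boolP [exists a, is_point a && (s a == p)].
  by exists a.
have [_ _ cut_w _] := rho_pull (rho_cut n_gt2 pp).
suff : [ffun i => (i != p) && (i != idx_w n)] (s (idx_w m)).
  by rewrite s_w ffunE eqxx andbF.
apply: cut_w => a pa; rewrite ffunE s_points // andbT.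
by apply: contra no_pre => sa; apply/existsP; exists a; rewrite pa.
Qed.

Lemma pull_u : s (idx_u m) = idx_u n.
Proof.
have [a0 pa0 sa0] := pull_onto_points (point0_is_point n_gt2).
have [a1 pa1 sa1] := pull_onto_points (point1_is_point n_gt2).
have [u0 _ _ _] := rho_pull (rho_point_u n_gt2 (point0_is_point n_gt2)).
have [u1 _ _ _] := rho_pull (rho_point_u n_gt2 (point1_is_point n_gt2)).
move: (u0 a0 pa0) (u1 a1 pa1); rewrite sa0 sa1 !ffunE !eqxx.
move=> /(_ isT) h0 /(_ isT) h1; apply/eqP; idx_lia.
Qed.

Lemma pull_t : s (idx_t m) = idx_t n.
Proof.
have [a0 pa0 sa0] := pull_onto_points (point0_is_point n_gt2).
have [a1 pa1 sa1] := pull_onto_points (point1_is_point n_gt2).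
have a01 : a0 != a1.
  apply/eqP => a01; move: sa1; rewrite -a01 sa0 => /(congr1 (@nat_of_ord _)).
  by rewrite point0E point1E.
have [_ _ _ wt] := rho_pull (rho_wt n_gt2).
have [_ pair_t _ _] := rho_pull (rho_pair n_gt2 (s_points pa0) (s_points pa1)).
move: (pair_t a0 a1 pa0 pa1 a01) wt; rewrite s_w sa0 sa1 !ffunE !eqxx orbT.
move=> /(_ isT isT) h0 /(_ isT) h1; apply/eqP; idx_lia.
Qed.

Lemma pull_point a : is_point a -> is_point (s a).
Proof.
move=> pa; have [a0 pa0 sa0] := pull_onto_points (point0_is_point n_gt2).
have [_ u0_pair _ _] := rho_pull (rho_point_u n_gt2 (point0_is_point n_gt2)).
have [t_u _ _ _] := rho_pull (rho_t n_gt2).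
apply: contraT => npa.
have a_a0 : a != a0 by apply: contraNneq npa => ->; rewrite sa0 point0_is_point.
move: (ltn_ord (s a)) (s_points pa) (t_u a pa) (u0_pair a a0 pa pa0 a_a0) npa.
rewrite pull_t pull_u sa0 !ffunE !eqxx; idx_lia.
Qed.

Lemma pull_inj a b : is_point a -> is_point b -> s a = s b -> a = b.
Proof.
move=> pa pb sab; apply/eqP; apply: contraT => ab.
have [_ pair_t _ _] := rho_pull (rho_point_u n_gt2 (pull_point pa)).
move: (pair_t a b pa pb ab) (pull_point pa); rewrite -sab pull_t !ffunE !eqxx => /(_ isT isT).
idx_lia.
Qed.

Lemma pull_points_card_eq : n = m.
Proof.
have s_inj_points : {in [set a | is_point a] &, injective s}.
  by move=> a b; rewrite !inE; exact: pull_inj.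
have s_img : s @: [set a | is_point a] = [set p | is_point p].
  apply/setP => p; rewrite inE; apply/imsetP/idP => [[a]|pp].
    by rewrite inE => pa ->; exact: pull_point.
  by have [a pa <-] := pull_onto_points pp; exists a; rewrite ?inE.
by have := card_in_imset s_inj_points; rewrite s_img !cardsE !card_points.
Qed.

End WFixed.

Lemma rho_avoid_w : n != m -> rho [ffun r => s r != idx_w n].
Proof.
move=> nm; apply/rhoP; split=> [a pa|a b pa pb ab|all_pts|]; rewrite !ffunE.
- move=> saw; have [C rhoC /and3P[Ca _ Cw]] := rho_sep n_gt2 saw saw.
  have [u_pull _ _ _] := rho_pull rhoC.
  by apply: contraNneq Cw => <-; exact: u_pull Ca.
- move=> saw sbw; have [C rhoC /and3P[Ca Cb Cw]] := rho_sep n_gt2 saw sbw.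
  have [_ t_pull _ _] := rho_pull rhoC.
  by apply: contraNneq Cw => <-; exact: t_pull Ca Cb.
- apply/eqP => s_w; move/eqP: nm; apply.
  by apply: pull_points_card_eq s_w => a /all_pts; rewrite ffunE.
- move=> sww; have [C rhoC /and3P[Cw' _ Cw]] := rho_sep n_gt2 sww sww.
  have [_ _ _ wt_pull] := rho_pull rhoC.
  by apply: contraNneq Cw => <-; exact: wt_pull.
Qed.

End Rigidity.

Section RowFunction.
Variables (N : nat) (R : pred (btuple N)) (C0 : btuple N) (v : btuple N).
Hypothesis R_C0 : R C0.

Definition ncols := #|{ffun 'I_N -> bool}|.

(* Arities of [pfun]s are successors, hence the spare column, filled with [C0]
   like every column not listed in [R]. *)
Definition col (c : 'I_ncols.+1) : btuple N :=
  let C := nth C0 (enum {ffun 'I_N -> bool}) c in if R C then C else C0.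

Definition col_index (C : btuple N) : 'I_ncols.+1 :=
  inord (index C (enum {ffun 'I_N -> bool})).

Lemma col_R c : R (col c).
Proof. by rewrite /col; case: ifP. Qed.

Lemma col_indexK C : R C -> col (col_index C) = C.
Proof.
move=> RC; rewrite /col /col_index inordK; first by rewrite nth_index ?mem_enum ?RC.
by rewrite ltnS /ncols cardE ltnW // index_mem mem_enum.
Qed.

Definition row (i : 'I_N) : btuple ncols.+1 := [ffun c => col c i].

(* Defined exactly on the rows of the matrix whose columns run through [R],
   sending row [i] to [v i]. *)
Definition row_fun : pfun :=
  PFun [ffun x => if [pick i | x == row i] is Some i then Some (v i) else None].

Lemma row_fun_pres m (S : pred (btuple m)) :
    (forall s : 'I_m -> 'I_N,
       (forall C, R C -> S [ffun r => C (s r)]) -> S [ffun r => v (s r)]) ->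
  pres row_fun S.
Proof.
move=> S_pull F SF domF.
have /fin_all_exists[s Fs] r : exists i, [pick i | F r == row i] = Some i.
  by move: (domF r); rewrite /= ffunE; case: pickP => // i _ _; exists i.
have FE r : F r = row (s r) by case: pickP (Fs r) => // i /eqP -> [->].
have : S [ffun r => v (s r)].
  apply: S_pull => C RC; have := SF (col_index C).
  by congr S; apply/ffunP => r; rewrite !ffunE FE ffunE col_indexK.
by congr S; apply/ffunP => r; rewrite !ffunE Fs.
Qed.

Lemma row_fun_not_pres :
  (forall i j, (forall C, R C -> C i = C j) -> v i = v j) -> ~~ R v -> ~ pres row_fun R.
Proof.
move=> v_compat Rv row_fun_R.
have dom_row i : pfn row_fun (row i) <> None.
  by rewrite /= ffunE; case: pickP => // /(_ i); rewrite eqxx.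
have R_cols c : R [ffun i => row i c].
  suff -> : [ffun i => row i c] = col c by exact: col_R.
  by apply/ffunP => i; rewrite !ffunE.
move: Rv (row_fun_R row R_cols dom_row); apply: contraNnot; congr R.
apply/ffunP => i; rewrite !ffunE.
case: pickP => [j /eqP rowij|/(_ i)]; last by rewrite eqxx.
apply: v_compat => C RC; rewrite -(col_indexK RC).
by move/ffunP: rowij => /(_ (col_index C)); rewrite !ffunE.
Qed.

End RowFunction.

Definition rho_row_fun n : pfun := row_fun (@rho n) [ffun _ => true] [ffun i => i != idx_w n].

Section RhoRowFun.
Variable n : nat.
Hypothesis n_gt2 : 2 < n.

Lemma rho_row_fun_pres m (S : pred (btuple m)) :
    (forall s : 'I_m -> 'I_n.+3,
       (forall C, rho C -> S [ffun r => C (s r)]) -> S [ffun r => s r != idx_w n]) ->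
  pres (rho_row_fun n) S.
Proof.
move=> S_pull; apply: row_fun_pres => s /S_pull.
by congr S; apply/ffunP => r; rewrite !ffunE.
Qed.

Lemma rho_row_fun_pres_le : pres (rho_row_fun n) le_rel.
Proof.
apply: rho_row_fun_pres => s s_pull; rewrite /le_rel !ffunE; apply/implyP => s0w.
apply: contraTneq isT => s1w; have [C rhoC /and3P[C0 _ Cw]] := rho_sep n_gt2 s0w s0w.
by have := s_pull C rhoC; rewrite /le_rel !ffunE C0 s1w (negbTE Cw).
Qed.

Lemma rho_row_fun_pres_horn : pres (rho_row_fun n) horn_rel.
Proof.
apply: rho_row_fun_pres => s s_pull; rewrite /horn_rel !ffunE; apply/implyP => /andP[s0w s1w].
apply: contraTneq isT => s2w; have [C rhoC /and3P[C0 C1 Cw]] := rho_sep n_gt2 s0w s1w.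
by have := s_pull C rhoC; rewrite /horn_rel !ffunE C0 C1 s2w (negbTE Cw).
Qed.

Lemma rho_row_fun_pres_one : pres (rho_row_fun n) one_rel.
Proof. by apply: rho_row_fun_pres => s /(_ _ (rho_empty n_gt2)); rewrite /one_rel !ffunE. Qed.

Lemma rho_row_fun_pres_rho m : n != m -> pres (rho_row_fun n) (@rho m).
Proof. by move=> nm; apply: rho_row_fun_pres => s s_pull; exact: rho_avoid_w. Qed.

Lemma rho_row_fun_not_pres_rho : ~ pres (rho_row_fun n) (@rho n).
Proof.
have w_sep k l : k != idx_w n -> l = idx_w n -> ~ (forall C, rho C -> C k = C l).
  move=> kw -> kl; have [C rhoC /and3P[Ck _ Cw]] := rho_sep n_gt2 kw kw.
  by move: (kl C rhoC); rewrite Ck (negbTE Cw).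
apply: (row_fun_not_pres (rho_top_meet_closed n).1) => [i j ij|].
  rewrite !ffunE; case: (eqVneq i (idx_w n)) => iw; case: (eqVneq j (idx_w n)) => jw //.
    by case: (w_sep j i jw iw) => C /ij.
  by case: (w_sep i j iw jw).
apply/rhoP => -[_ _ all_w _].
suff : [ffun i => i != idx_w n] (idx_w n) by rewrite ffunE eqxx.
by apply: all_w => i; rewrite ffunE; idx_lia.
Qed.

End RhoRowFun.

Definition rels (S : nat -> bool) (R : brel) : Prop :=
  base_rels R \/ exists2 k, S k & R = existT _ _ (@rho k.+3).

Lemma rels_top_meet_closed S R : rels S R -> top_meet_closed (projT2 R).
Proof.
case=> [[]|[k _]] ->; last exact: rho_top_meet_closed.
- split=> [|x y] /=; rewrite /le_rel !ffunE //.
  by case: (x ord0); case: (x ord_max); case: (y ord0); case: (y ord_max).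
- split=> [|x y] /=; rewrite /horn_rel !ffunE //.
  by case: (x ord0); case: (x ord_max); case: (x (lift ord0 ord0));
     case: (y ord0); case: (y ord_max); case: (y (lift ord0 ord0)).
- by split=> [|x y] /=; rewrite /one_rel !ffunE // => -> ->.
Qed.

Lemma pPol_rels_Istr S : Istr (fun f => Lambda f /\ T1 f) (pPol (rels S)).
Proof.
split; first exact: pPol_strong.
by apply: pPol_total_LambdaT1 => [R|]; [left | exact: rels_top_meet_closed].
Qed.

Lemma rho_row_fun_pPol_rels S k : pPol (rels S) (rho_row_fun k.+3) <-> S k = false.
Proof.
have k_gt2 : 2 < k.+3 by [].
split=> [hS|Sk R].
  apply: negbTE; apply/negP => Sk; apply: (rho_row_fun_not_pres_rho k_gt2).
  by apply: (hS (existT _ _ _)); right; exists k.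
case=> [[]|[j Sj]] ->.
- exact: rho_row_fun_pres_le.
- exact: rho_row_fun_pres_horn.
- exact: rho_row_fun_pres_one.
by apply: rho_row_fun_pres_rho => //; apply: contraTneq Sj => -[<-]; rewrite Sk.
Qed.

Lemma pPol_rels_inj : injective (fun S => pPol (rels S)).
Proof.
move=> S T /= ST; apply/funext => k.
have : S k = false <-> T k = false by rewrite -!rho_row_fun_pPol_rels ST.
by case: (S k) (T k) => [] [] [Sk Tk] //; [move: (Tk erefl) | move: (Sk erefl)].
Qed.

Section Cardinality.
Local Open Scope classical_set_scope.
Local Open Scope card_scope.

Lemma bijective_of_injections (T : pointedType) U (f : T -> U) (g : U -> T) :
  injective f -> injective g -> exists h : T -> U, bijective h.
Proof.
move=> f_inj g_inj.
have : [set: U] #= [set: T].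
  apply: Cantor_Bernstein; first by apply/pcard_injP; exists g => x y _ _; exact: g_inj.
  rewrite -(card_le_eql (inj_card_eq (in2W f_inj))).
  exact: subset_card_le.
case/card_set_bijP => h; rewrite setTT_bijective => -[h' hK h'K].
by exists h'; exists h.
Qed.

End Cardinality.

Definition pfun_code (f : pfun) : nat :=
  pickle (Tagged (fun n => {ffun btuple n.+1 -> option bool}) (pfn f)).

Lemma pfun_code_inj : injective pfun_code.
Proof.
apply: inj_comp (pcan_inj pickleK) _.
by apply: (can_inj (g := fun t => PFun (tagged t))) => -[n ff].
Qed.

Definition pred_code (X : pfun -> Prop) (k : nat) : bool :=
  `[< exists2 f, pfun_code f = k & X f >].

Lemma pred_code_inj : injective pred_code.
Proof.
move=> X Y XY; apply/funext => f; apply/propext.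
have codeP Z : Z f <-> pred_code Z (pfun_code f).
  split=> [Zf|/asboolP[g /pfun_code_inj -> //]].
  by apply/asboolP; exists f.
by split=> [/(codeP X)|/(codeP Y)]; [rewrite XY => /(codeP Y) | rewrite -XY => /(codeP X)].
Qed.

Theorem mainTheorem6 :
  exists g : (nat -> bool) ->
             {X : pfun -> Prop | Istr (fun f => Lambda f /\ T1 f) X},
    bijective g.
Proof.
pose F S : {X | Istr (fun f => Lambda f /\ T1 f) X} := exist _ _ (pPol_rels_Istr S).
apply: (bijective_of_injections (f := F) (g := fun X => pred_code (sval X))).
- by move=> S T /(congr1 sval); exact: pPol_rels_inj.
- by move=> [X ?] [Y ?] /pred_code_inj XY; exact: eq_exist.
Qed.
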